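(* Let $\mathcal N$ be a network with parties $A_1,\dots,A_n$ all of whose sources are bipartite (each source is adjacent to exactly two parties), and let $p(a_1,\dots,a_n)$ be the output distribution of a causally consistent model on $\mathcal N$ (finite output alphabets). For each $i$ let $f_i$ be an arbitrary real-valued function of the output $a_i$. Then the covariance matrix $\mathcal C(f_1,\dots,f_n)$ admits an $\mathcal N$-compatible matrix decomposition.
   Context: A network $\mathcal N$ is a bipartite graph between sources $S_\alpha$ ($\alpha=1,\dots,m$) and parties $A_i$ ($i=1,\dots,n$); $\alpha\to i$ means $S_\alpha$ is adjacent to $A_i$. Every source has at least one adjacent party, every party has at least one adjacent source, and no two sources have comparable (under inclusion) sets of adjacent parties. Covariance matrix: for functions $f_i(a_i)$ and a joint distribution $p$ of outputs, $\mathcal C=\mathcal C(f_1,\dots,f_n)$ is the $n\times n$ matrix with $\mathcal C_{ij}=\mathbb E[\bar f_i f_j]-\mathbb E[\bar f_i]\,\mathbb E[f_j]$. $\mathcal N$-compatible matrix decomposition: for each source $\alpha$, let $\mathcal L_\alpha$ be the set of $n\times n$ complex positive semidefinite matrices $M_\alpha$ with $(M_\alpha)_{ij}\neq 0$ only if $\alpha\to i$ and $\alpha\to j$. A positive semidefinite $n\times n$ matrix $M$ admits an $\mathcal N$-compatible matrix decomposition if $M=\sum_\alpha M_\alpha$ with $M_\alpha\in\mathcal L_\alpha$ for all $\alpha$. Non-fanout inflation of order $d\ge 2$: choose, for every pair $(\alpha,i)$ with $\alpha\to i$, a permutation $\pi_i^\alpha$ of $\{1,\dots,d\}$. The inflated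 network $\widetilde{\mathcal N}$ has parties $A_i^{(k)}$ and sources $S_\alpha^{(k)}$ ($1\le k\le d$), with $S_\alpha^{(k)}$ adjacent to $A_i^{((\pi_i^\alpha)^{-1}(k))}$ whenever $\alpha\to i$, and no other adjacencies. Causally consistent model on $\mathcal N$: a joint distribution $p(a_1,\dots,a_n)$ of the outputs of $\mathcal N$ together with, for every non-fanout inflation $\widetilde{\mathcal N}$ of every order $d\ge2$, a joint distribution of the outputs $a_i^{(k)}$ of its parties, such that: (C0) if $A_i\neq A_j$ share no source in $\mathcal N$, then $p(a_i,a_j)=p(a_i)p(a_j)$; (C1) in every inflation, each $a_i^{(k)}$ has marginal distribution $p(a_i)$, and if $A_i^{(k)}$ and $A_j^{(l)}$ with $i\neq j$ share a source in $\widetilde{\mathcal N}$, then the joint distribution of $(a_i^{(k)},a_j^{(l)})$ equals $p(a_i,a_j)$; (C2) in every inflation, if two distinct parties share no source, the joint distribution of their outputs factorizes into the product of their marginals. *)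

From HB Require Import structures.
From mathcomp Require Import all_boot all_order all_algebra all_fingroup.
From mathcomp Require Import reals complex.
Set Implicit Arguments. Unset Strict Implicit. Unset Printing Implicit Defensive.
Import Order.TTheory GRing.Theory Num.Theory.
Local Open Scope ring_scope.

(* A network with m sources and n parties: adj a i means S_a -> A_i. *)
Definition is_network (m n : nat) (adj : 'I_m -> 'I_n -> bool) : Prop :=
  [/\ (forall a : 'I_m, exists i : 'I_n, adj a i),
      (forall i : 'I_n, exists a : 'I_m, adj a i) &
      (forall a b : 'I_m, a != b -> ~ (forall i : 'I_n, adj a i -> adj b i))].

Definition bipartite_sources (m n : nat) (adj : 'I_m -> 'I_n -> bool) : Prop :=
  forall a : 'I_m, #|[set i : 'I_n | adj a i]| = 2%N.

Definition share_source (m n : nat) (adj : 'I_m -> 'I_n -> bool) (i j : 'I_n) : Prop :=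
  exists a : 'I_m, adj a i && adj a j.

Definition is_dist (R : realType) (I T : finType) (q : {ffun I -> T} -> R) : Prop :=
  (forall x, 0 <= q x) /\ \sum_x q x = 1.

Definition marg1 (R : realType) (I T : finType) (q : {ffun I -> T} -> R)
  (i : I) (s : T) : R := \sum_(x : {ffun I -> T} | x i == s) q x.

Definition marg2 (R : realType) (I T : finType) (q : {ffun I -> T} -> R)
  (i j : I) (s t : T) : R := \sum_(x : {ffun I -> T} | (x i == s) && (x j == t)) q x.

(* Non-fanout inflation of order d with permutations pi a i = pi_i^a.
   Party (i,l) = A_i^(l) is adjacent to source (a,k) = S_a^(k) iff a -> i and
   l = (pi_i^a)^-1 k, i.e. k = pi_i^a l. *)
Definition infl_adj (m n d : nat) (adj : 'I_m -> 'I_n -> bool)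
  (pi : 'I_m -> 'I_n -> {perm 'I_d}) (s : 'I_m * 'I_d) (x : 'I_n * 'I_d) : bool :=
  adj s.1 x.1 && (s.2 == pi s.1 x.1 x.2).

Definition infl_share (m n d : nat) (adj : 'I_m -> 'I_n -> bool)
  (pi : 'I_m -> 'I_n -> {perm 'I_d}) (x y : 'I_n * 'I_d) : Prop :=
  exists s : 'I_m * 'I_d, infl_adj adj pi s x && infl_adj adj pi s y.

(* Causally consistent model on the network, with output distribution p.
   Q d pi is the joint output distribution of the inflation of order d
   given by pi (only constrained for d >= 2). *)
Definition causally_consistent (R : realType) (T : finType) (m n : nat)
  (adj : 'I_m -> 'I_n -> bool) (p : {ffun 'I_n -> T} -> R) : Prop :=
  [/\ is_dist p,
      (* C0 *)
      (forall i j : 'I_n, i != j -> ~ share_source adj i j ->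
         forall s t, marg2 p i j s t = marg1 p i s * marg1 p j t) &
      exists Q : forall d : nat, ('I_m -> 'I_n -> {perm 'I_d}) ->
                   {ffun ('I_n * 'I_d)%type -> T} -> R,
        forall (d : nat) (pi : 'I_m -> 'I_n -> {perm 'I_d}), (2 <= d)%N ->
        [/\ is_dist (Q d pi),
            (* C1 *)
            (forall (x : 'I_n * 'I_d) s, marg1 (Q d pi) x s = marg1 p x.1 s),
            (forall x y : 'I_n * 'I_d, x.1 != y.1 -> infl_share adj pi x y ->
               forall s t, marg2 (Q d pi) x y s t = marg2 p x.1 y.1 s t) &
            (* C2 *)
            (forall x y : 'I_n * 'I_d, x != y -> ~ infl_share adj pi x y ->
               forall s t, marg2 (Q d pi) x y s t
                           = marg1 (Q d pi) x s * marg1 (Q d pi) y t)]].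

Definition expect (R : realType) (T : finType) (n : nat)
  (p : {ffun 'I_n -> T} -> R) (g : {ffun 'I_n -> T} -> R) : R :=
  \sum_x p x * g x.

Definition cov_matrix (R : realType) (T : finType) (n : nat)
  (p : {ffun 'I_n -> T} -> R) (f : 'I_n -> T -> R) : 'M[R]_n :=
  \matrix_(i, j) (expect p (fun x => f i (x i) * f j (x j))
                  - expect p (fun x => f i (x i)) * expect p (fun x => f j (x j))).

Definition psd (R : rcfType) (n : nat) (M : 'M[R[i]]_n) : Prop :=
  (map_mx Num.conj M)^T = M /\
  forall v : 'cV[R[i]]_n, 0 <= ((map_mx Num.conj v)^T *m M *m v) 0 0.

Definition compatible_decomposition (R : rcfType) (m n : nat)
  (adj : 'I_m -> 'I_n -> bool) (M : 'M[R[i]]_n) : Prop :=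
  exists Ms : 'I_m -> 'M[R[i]]_n,
    (forall a : 'I_m, psd (Ms a) /\
       forall i j : 'I_n, Ms a i j != 0 -> adj a i && adj a j) /\
    M = \sum_(a < m) Ms a.

Definition realC (R : rcfType) (r : R) : R[i] := (r%:C)%C.

From HB Require Import structures.
From mathcomp Require Import all_boot all_order all_algebra all_fingroup.
From mathcomp Require Import reals complex.
From mathcomp Require Import ring.
Set Implicit Arguments. Unset Strict Implicit. Unset Printing Implicit Defensive.
Import Order.TTheory GRing.Theory Num.Theory.
Local Open Scope ring_scope.

(* Let C be the covariance matrix of f_1(a_1), ..., f_n(a_n) and B its
   comparison matrix (B_rr = C_rr, B_rw = -|C_rw| for r <> w).
   1. In the inflation of order 2 in which, for every source with positively
      correlated endpoints, the two copies of one endpoint are swapped, the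
      covariances of the inflated outputs are read off conditions (C1)-(C2);
      the variance of sum_r v_r (f_r(a_r^(0)) - f_r(a_r^(1))) equals 2 v^T B v,
      so B is positive semidefinite (comparison_form_ge0).
   2. A positive semidefinite symmetric Z-matrix has a positive vector x with
      Bx >= 0; this is proved by induction, eliminating one coordinate at a
      time through Schur complements (zmatrix_supersolution).
   3. Given such an x, each source with endpoints i, j receives the real
      rank-one matrix carrying C_ij off the diagonal and |C_ij| x_j / x_i,
      |C_ij| x_i / x_j on the diagonal, and every party r hands its slack
      (Bx)_r / x_r to one of its sources; these positive semidefinite
      summands add up to C (decomposition_of_supersolution).
   Condition (C0), i.e. C_rw = 0 for parties sharing no source, is what makes
   the summands account for every entry of C. *)

Section Covariance.
Variables (R : realType) (I T : finType).
Implicit Types (q : {ffun I -> T} -> R) (g h : T -> R).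

Definition cov q (i j : I) g h : R :=
  \sum_x q x * (g (x i) * h (x j))
  - (\sum_x q x * g (x i)) * (\sum_x q x * h (x j)).

Lemma expect_marg1 q (i : I) g :
  \sum_x q x * g (x i) = \sum_s marg1 q i s * g s.
Proof.
rewrite (partition_big (fun x : {ffun I -> T} => x i) predT) //=.
apply: eq_bigr => s _; rewrite /marg1 big_distrl /=.
by apply: eq_bigr => x /eqP ->.
Qed.

Lemma expect_marg2 q (i j : I) (F : T -> T -> R) :
  \sum_x q x * F (x i) (x j) = \sum_s \sum_t marg2 q i j s t * F s t.
Proof.
rewrite (partition_big (fun x : {ffun I -> T} => x i) predT) //=.
apply: eq_bigr => s _.
rewrite (partition_big (fun x : {ffun I -> T} => x j) predT) //=.
apply: eq_bigr => t _; rewrite /marg2 big_distrl /=.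
by apply: eq_bigr => x /andP[/eqP -> /eqP ->].
Qed.

Lemma cov_marg2 q (i j : I) g h : cov q i j g h =
  \sum_s \sum_t marg2 q i j s t * (g s * h t)
  - (\sum_s marg1 q i s * g s) * (\sum_t marg1 q j t * h t).
Proof.
by rewrite /cov (expect_marg2 q i j (fun s t => g s * h t)) !expect_marg1.
Qed.

Lemma cov_diag q (i : I) g h : cov q i i g h =
  \sum_s marg1 q i s * (g s * h s)
  - (\sum_s marg1 q i s * g s) * (\sum_t marg1 q i t * h t).
Proof. by rewrite /cov (expect_marg1 q i (fun s => g s * h s)) !expect_marg1. Qed.

Lemma cov_indep q (i j : I) g h :
  (forall s t, marg2 q i j s t = marg1 q i s * marg1 q j t) -> cov q i j g h = 0.
Proof.
move=> indep; rewrite cov_marg2 big_distrl /=; apply/eqP; rewrite subr_eq0; apply/eqP.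
apply: eq_bigr => s _; rewrite big_distrr /=; apply: eq_bigr => t _.
by rewrite indep; ring.
Qed.

Lemma cov_sym q (i j : I) g h : cov q i j g h = cov q j i h g.
Proof.
rewrite /cov mulrC; congr (_ - _).
by apply: eq_bigr => x _; rewrite [g _ * _]mulrC.
Qed.

(* Covariance matrices are positive semidefinite: the quadratic form is the
   variance of the linear combination sum_X c_X g_X(a_X). *)
Lemma cov_form_ge0 q (g : I -> T -> R) (c : I -> R) : is_dist q ->
  0 <= \sum_X \sum_Y c X * c Y * cov q X Y (g X) (g Y).
Proof.
case=> q_ge0 q_sum1.
pose h x := \sum_X c X * g X (x X).
pose mu := \sum_x q x * h x.
have mean_h : mu = \sum_X c X * \sum_x q x * g X (x X).
  rewrite /mu /h; under eq_bigr do rewrite big_distrr /=.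
  rewrite exchange_big /=; apply: eq_bigr => X _; rewrite big_distrr /=.
  by apply: eq_bigr => x _; ring.
have square_h : \sum_x q x * h x ^+ 2 =
    \sum_X \sum_Y c X * c Y * \sum_x q x * (g X (x X) * g Y (x Y)).
  transitivity (\sum_x \sum_X \sum_Y c X * c Y * (q x * (g X (x X) * g Y (x Y)))).
    apply: eq_bigr => x _; rewrite expr2 /h big_distrl big_distrr /=.
    apply: eq_bigr => X _; rewrite !big_distrr /=; apply: eq_bigr => Y _ /=; ring.
  rewrite exchange_big; apply: eq_bigr => X _; rewrite exchange_big.
  by apply: eq_bigr => Y _; rewrite big_distrr.
have variance : \sum_x q x * (h x - mu) ^+ 2 = \sum_x q x * h x ^+ 2 - mu ^+ 2.
  rewrite (eq_bigr (fun x => q x * h x ^+ 2 - 2 * mu * (q x * h x) + mu ^+ 2 * q x));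
    last by move=> x _; ring.
  by rewrite big_split sumrB /= -!mulr_sumr q_sum1 -/mu; ring.
have : 0 <= \sum_x q x * (h x - mu) ^+ 2.
  by apply: sumr_ge0 => x _; apply: mulr_ge0; [exact: q_ge0 | exact: sqr_ge0].
rewrite variance square_h mean_h expr2 mulr_suml; congr (0 <= _).
rewrite -sumrB; apply: eq_bigr => X _; rewrite mulr_sumr -sumrB.
by apply: eq_bigr => Y _; rewrite /cov; ring.
Qed.

End Covariance.

Lemma cov_diag_eq (R : realType) (I J T : finType) (q : {ffun I -> T} -> R)
  (q' : {ffun J -> T} -> R) (i : I) (i' : J) (g h : T -> R) :
  (forall s, marg1 q i s = marg1 q' i' s) -> cov q i i g h = cov q' i' i' g h.
Proof.
by move=> m1; rewrite !cov_diag; congr (_ - _ * _); apply: eq_bigr => s _; rewrite m1.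
Qed.

Lemma cov_eq (R : realType) (I J T : finType) (q : {ffun I -> T} -> R)
  (q' : {ffun J -> T} -> R) (i j : I) (i' j' : J) (g h : T -> R) :
  (forall s, marg1 q i s = marg1 q' i' s) -> (forall s, marg1 q j s = marg1 q' j' s) ->
  (forall s t, marg2 q i j s t = marg2 q' i' j' s t) -> cov q i j g h = cov q' i' j' g h.
Proof.
move=> m1i m1j m2; rewrite !cov_marg2; congr (_ - _ * _); apply: eq_bigr => s _.
- by apply: eq_bigr => t _; rewrite m2.
- by rewrite m1i.
- by rewrite m1j.
Qed.

Lemma bipartite_endpoints (m n : nat) (adj : 'I_m -> 'I_n -> bool) :
  bipartite_sources adj ->
  exists e : 'I_m -> 'I_n * 'I_n,
    forall a, (e a).1 != (e a).2 /\ forall i, adj a i = (i == (e a).1) || (i == (e a).2).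
Proof.
move=> hbip.
suff /fin_all_exists : forall a, exists ij : 'I_n * 'I_n,
    ij.1 != ij.2 /\ forall i, adj a i = (i == ij.1) || (i == ij.2) by [].
move=> a; have /eqP/cards2P [r [w [rw hS]]] := hbip a.
exists (r, w); split=> // i.
have := f_equal (fun A : {set 'I_n} => i \in A) hS.
by rewrite /= !inE.
Qed.

Section BipartiteNetwork.
Variables (m n : nat) (adj : 'I_m -> 'I_n -> bool) (e : 'I_m -> 'I_n * 'I_n).
Hypothesis hN : is_network adj.
Hypothesis he : forall a, (e a).1 != (e a).2 /\
  forall i, adj a i = (i == (e a).1) || (i == (e a).2).

Lemma source_of_pair a r w : r != w -> adj a r -> adj a w ->
  forall i, adj a i = (i == r) || (i == w).
Proof.
case: (he a) => _ ea rw; rewrite !ea => ar aw i; rewrite ea.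
by case/orP: ar aw rw => /eqP-> /orP[]/eqP->; rewrite ?eqxx // orbC.
Qed.

(* Two parties share at most one source, since sources are incomparable. *)
Lemma shared_source_unique a b r w : r != w ->
  adj a r -> adj a w -> adj b r -> adj b w -> a = b.
Proof.
move=> rw ar aw br bw; apply/eqP; apply: contraT => ab.
case: hN => _ _ /(_ a b ab) incomparable; exfalso; apply: incomparable => i.
by rewrite (source_of_pair rw ar aw) (source_of_pair rw br bw).
Qed.

Lemma sum_shared_sources (R : nzRingType) r w (c : R) : r != w ->
  (~ share_source adj r w -> c = 0) ->
  \sum_a (adj a r && adj a w)%:R * c = c.
Proof.
move=> rw unshared.
have [/existsP[a /andP[ar aw]]|none] := boolP [exists a, adj a r && adj a w].
  rewrite (bigD1 a) ?ar ?aw //= mul1r big1 ?addr0 // => b ba.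
  case: (boolP (adj b r && adj b w)) => [/andP[br bw]|]; last by rewrite mul0r.
  by move: ba; rewrite (shared_source_unique rw br bw ar aw) eqxx.
rewrite unshared; first by rewrite big1 // => a _; rewrite mulr0.
by case=> a raw; case/existsP: none; exists a.
Qed.

End BipartiteNetwork.

Definition comparison (R : realDomainType) (n : nat) (C : 'M[R]_n) (r w : 'I_n) : R :=
  if r == w then C r r else - `|C r w|.

Lemma comparison_sym (R : realDomainType) (n : nat) (C : 'M[R]_n) :
  (forall r w, C r w = C w r) -> forall r w, comparison C r w = comparison C w r.
Proof.
by move=> symC r w; rewrite /comparison eq_sym; case: eqP => [->|_] //; rewrite symC.
Qed.

Lemma comparison_offdiag (R : realDomainType) (n : nat) (C : 'M[R]_n) r w :
  r != w -> comparison C r w <= 0.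
Proof. by rewrite /comparison => /negbTE->; rewrite oppr_le0. Qed.

Lemma cov_matrixE (R : realType) (T : finType) (n : nat) (p : {ffun 'I_n -> T} -> R)
  (f : 'I_n -> T -> R) (r w : 'I_n) : cov_matrix p f r w = cov p r w (f r) (f w).
Proof. by rewrite mxE. Qed.

Definition swap_if (b : bool) : {perm 'I_2} := if b then tperm ord0 ord_max else 1%g.

Lemma swap_if_eq (b : bool) (k l : 'I_2) :
  (k == swap_if b l) = (if b then k != l else k == l).
Proof.
have I2E (j : 'I_2) : j = ord0 \/ j = ord_max.
  by case: j => -[|[|//]] ?; [left|right]; apply: val_inj.
by case: b; case: (I2E k) => ->; case: (I2E l) => ->; rewrite /swap_if ?tpermL ?tpermR ?perm1.
Qed.

Section OrderTwoInflation.
Variables (R : realType) (T : finType) (m n : nat) (adj : 'I_m -> 'I_n -> bool).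
Variables (e : 'I_m -> 'I_n * 'I_n) (p : {ffun 'I_n -> T} -> R) (f : 'I_n -> T -> R).
Hypothesis he : forall a, (e a).1 != (e a).2 /\
  forall i, adj a i = (i == (e a).1) || (i == (e a).2).
Hypothesis hp : causally_consistent adj p.
Local Notation C := (cov_matrix p f).

Lemma cov_matrix_sym r w : C r w = C w r.
Proof. by rewrite !cov_matrixE cov_sym. Qed.

Lemma cov_matrix_unshared r w : r != w -> ~ share_source adj r w -> C r w = 0.
Proof. by case: hp => _ C0 _ rw unshared; rewrite cov_matrixE cov_indep //; exact: C0. Qed.

(* The inflation used in the proof: for each source whose endpoints are
   positively correlated, the copies of its second endpoint are swapped, so
   that copy k of one endpoint meets copy 1 - k of the other. *)
Definition infl_perm (a : 'I_m) (r : 'I_n) : {perm 'I_2} :=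
  swap_if ((r == (e a).2) && (0 < C (e a).1 (e a).2)).

Lemma infl_perm_agree a r w k l : r != w -> adj a r -> adj a w ->
  (infl_perm a r k == infl_perm a w l) = (if 0 < C r w then k != l else k == l).
Proof.
case: (he a) => e12 ea rw; rewrite !ea /infl_perm.
case/orP=> /eqP rE /orP[]/eqP wE; subst r w; rewrite ?eqxx // in rw.
  rewrite (negbTE e12) eqxx /= perm1; exact: swap_if_eq.
by rewrite (negbTE e12) eqxx /= perm1 eq_sym swap_if_eq cov_matrix_sym (eq_sym l).
Qed.

Lemma infl_shareE X Y : infl_share adj infl_perm X Y <->
  exists a, adj a X.1 && adj a Y.1 && (infl_perm a X.1 X.2 == infl_perm a Y.1 Y.2).
Proof.
split=> [[[a k] /andP[/andP[/= aX /eqP kX] /andP[/= aY /eqP kY]]]|].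
  by exists a; rewrite aX aY -kX -kY eqxx.
case=> a /andP[/andP[aX aY] /eqP pXY].
by exists (a, infl_perm a X.1 X.2); rewrite /infl_adj /= aX aY pXY !eqxx.
Qed.

Lemma infl_share_copies r k l : k != l -> ~ infl_share adj infl_perm (r, k) (r, l).
Proof. by move=> kl /infl_shareE [a /andP[_ /eqP/perm_inj /= kE]]; rewrite kE eqxx in kl. Qed.

Lemma infl_share_parties r w k l : r != w ->
  infl_share adj infl_perm (r, k) (w, l) <->
  share_source adj r w /\ (if 0 < C r w then k != l else k == l).
Proof.
move=> rw; rewrite infl_shareE /=; split.
  case=> a /andP[/andP[ar aw]]; rewrite infl_perm_agree // => kl.
  by split=> //; exists a; rewrite ar.
case=> -[a /andP[ar aw]] kl; exists a; rewrite ar aw infl_perm_agree //.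
Qed.

Variable Qd : {ffun ('I_n * 'I_2)%type -> T} -> R.
Hypothesis Qd_marg1 : forall X s, marg1 Qd X s = marg1 p X.1 s.
Hypothesis Qd_marg2 : forall X Y, X.1 != Y.1 -> infl_share adj infl_perm X Y ->
  forall s t, marg2 Qd X Y s t = marg2 p X.1 Y.1 s t.
Hypothesis Qd_indep : forall X Y, X != Y -> ~ infl_share adj infl_perm X Y ->
  forall s t, marg2 Qd X Y s t = marg1 Qd X s * marg1 Qd Y t.

Lemma inflated_cov X Y : cov Qd X Y (f X.1) (f Y.1) =
  if X.1 == Y.1 then (X.2 == Y.2)%:R * C X.1 X.1
  else (if 0 < C X.1 Y.1 then X.2 != Y.2 else X.2 == Y.2)%:R * C X.1 Y.1.
Proof.
case: X Y => [r k] [w l] /=.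
have [<-|rw] := eqVneq r w.
  have [<-|kl] := eqVneq k l; first by rewrite mul1r cov_matrixE; exact: cov_diag_eq.
  rewrite mul0r cov_indep //; apply: Qd_indep; last exact: infl_share_copies.
  by rewrite xpair_eqE eqxx (negbTE kl).
have distinct : (r, k) != (w, l) by rewrite xpair_eqE (negbTE rw).
have [/existsP shared|unshared] := boolP [exists a, adj a r && adj a w]; last first.
  have no_source : ~ share_source adj r w by case=> a raw; case/existsP: unshared; exists a.
  rewrite cov_matrix_unshared // mulr0 cov_indep //; apply: Qd_indep => //.
  by case/(infl_share_parties _ _ rw).
have [agree|disagree] := boolP (if 0 < C r w then k != l else k == l).
  have share : infl_share adj infl_perm (r, k) (w, l) by apply/infl_share_parties.
  rewrite mul1r cov_matrixE; apply: cov_eq => [s|s|s t]; [exact: Qd_marg1 ..|].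
  exact: Qd_marg2.
rewrite mul0r cov_indep //; apply: Qd_indep => //.
by case/(infl_share_parties _ _ rw) => _ agree; rewrite agree in disagree.
Qed.

Hypothesis Qd_dist : is_dist Qd.

(* The variance of sum_r v_r (f_r(a_r^(0)) - f_r(a_r^(1))) in the inflation is
   2 v^T B v, where B is the comparison matrix of C; hence B is positive
   semidefinite. *)
Lemma comparison_form_ge0 (v : 'I_n -> R) :
  0 <= \sum_r \sum_w v r * comparison C r w * v w.
Proof.
pose sgn (k : 'I_2) : R := if k == ord0 then 1 else -1.
have := cov_form_ge0 (fun X => f X.1) (fun X => v X.1 * sgn X.2) Qd_dist.
have sum_pairs (F : 'I_n * 'I_2 -> R) : \sum_X F X = \sum_r \sum_k F (r, k).
  by rewrite pair_bigA; apply: eq_bigr => -[].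
have sum_I2 (F : 'I_2 -> R) : \sum_k F k = F ord0 + F ord_max.
  by rewrite !big_ord_recl big_ord0 addr0; congr (_ + F _); apply: val_inj.
have block r w : \sum_k \sum_l v r * sgn k * (v w * sgn l) * cov Qd (r, k) (w, l) (f r) (f w)
    = 2 * (v r * comparison C r w * v w).
  rewrite !sum_I2 !inflated_cov /comparison /sgn /=.
  have [<-|rw] := eqVneq r w; first by rewrite /=; ring.
  have [Cpos|Cneg] := ltP 0 (C r w).
    by rewrite gtr0_norm //=; ring.
  by rewrite ler0_norm //=; ring.
rewrite sum_pairs; under eq_bigr do rewrite exchange_big sum_pairs.
under eq_bigr do under eq_bigr do rewrite exchange_big block.
by under eq_bigr do rewrite -mulr_sumr; rewrite -mulr_sumr pmulr_rge0.
Qed.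

End OrderTwoInflation.

Section ZMatrix.
Variables (R : realFieldType) (n : nat).
Implicit Types (B : 'I_n -> 'I_n -> R) (A : {set 'I_n}) (v : 'I_n -> R).

Definition qform B A v : R := \sum_(i in A) \sum_(j in A) v i * B i j * v j.

Definition schur B k i j : R := B i j - B i k * B k j / B k k.

Section Symmetric.
Variable B : 'I_n -> 'I_n -> R.
Hypothesis symB : forall i j, B i j = B j i.

Lemma qform_pivot A k t v : k \in A ->
  qform B A (fun i => if i == k then t else v i) =
  B k k * t ^+ 2 + 2 * t * \sum_(j in A :\ k) B k j * v j + qform B (A :\ k) v.
Proof.
move=> kA; rewrite /qform.
have off_k i : i \in A :\ k -> (if i == k then t else v i) = v i.
  by rewrite in_setD1 => /andP[/negbTE-> _].
rewrite (big_setD1 k kA) (big_setD1 _ kA) /=.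
under [X in _ + X = _]eq_bigr => i iA do rewrite (big_setD1 k kA) /=.
rewrite big_split /= eqxx.
have row_k : \sum_(j in A :\ k) t * B k j * (if j == k then t else v j) =
    t * \sum_(j in A :\ k) B k j * v j.
  by rewrite mulr_sumr; apply: eq_bigr => j /off_k->; rewrite mulrA.
have col_k : \sum_(i in A :\ k) (if i == k then t else v i) * B i k * t =
    t * \sum_(j in A :\ k) B k j * v j.
  by rewrite mulr_sumr; apply: eq_bigr => i /off_k->; rewrite symB; ring.
have rest : \sum_(i in A :\ k) \sum_(j in A :\ k)
      (if i == k then t else v i) * B i j * (if j == k then t else v j) =
    \sum_(i in A :\ k) \sum_(j in A :\ k) v i * B i j * v j.
  by apply: eq_bigr => i /off_k->; apply: eq_bigr => j /off_k->.
by rewrite row_k col_k rest; ring.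
Qed.

Lemma schur_sym k i j : schur B k i j = schur B k j i.
Proof. by rewrite /schur (symB i j) (symB i k) (symB k j); ring. Qed.

Lemma schur_qform A k v :
  qform (schur B k) A v = qform B A v - (\sum_(j in A) B k j * v j) ^+ 2 / B k k.
Proof.
rewrite expr2 big_distrl /= big_distrl /= /qform -sumrB; apply: eq_bigr => i _.
rewrite big_distrr /= big_distrl /= -sumrB; apply: eq_bigr => j _.
by rewrite /schur (symB i k); ring.
Qed.

Section PSD.
Variables (A : {set 'I_n}) (k : 'I_n).
Hypothesis kA : k \in A.
Hypothesis psdB : forall v, 0 <= qform B A v.

Lemma pivot_ge0 : 0 <= B k k.
Proof.
have := psdB (fun i => if i == k then 1 else 0).
rewrite (qform_pivot 1 (fun _ => 0) kA) expr1n mulr1.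
rewrite big1 ?mulr0 ?addr0 => [|j _]; last by rewrite mulr0.
by rewrite /qform big1 ?addr0 // => i _; rewrite big1 // => j _; rewrite !mul0r.
Qed.

Lemma schur_psd v : 0 <= qform (schur B k) (A :\ k) v.
Proof.
rewrite schur_qform; set bv := \sum_(j in A :\ k) B k j * v j.
have [Bkk0|Bkk_neq0] := eqVneq (B k k) 0.
  have := psdB (fun i => if i == k then 0 else v i).
  by rewrite (qform_pivot 0 v kA) Bkk0 invr0 !mulr0 !mul0r !add0r subr0.
have := psdB (fun i => if i == k then - bv / B k k else v i).
rewrite (qform_pivot _ v kA) -/bv.
suff -> : B k k * (- bv / B k k) ^+ 2 + 2 * (- bv / B k k) * bv = - (bv ^+ 2 / B k k).
  by rewrite addrC.
by field.
Qed.

Hypothesis zB : forall i j, i \in A -> j \in A -> i != j -> B i j <= 0.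

Lemma schur_zmatrix i j : i \in A :\ k -> j \in A :\ k -> i != j -> schur B k i j <= 0.
Proof.
rewrite !in_setD1 => /andP[ik iA] /andP[jk jA] ij; rewrite /schur subr_le0.
apply: le_trans (zB iA jA ij) _; apply: mulr_ge0; last by rewrite invr_ge0 pivot_ge0.
by apply: mulr_le0; apply: zB; rewrite // eq_sym.
Qed.

Section Supersolution.
Variable y : 'I_n -> R.
Hypothesis y_gt0 : forall i, i \in A :\ k -> 0 < y i.

Lemma pivot_row_le0 : \sum_(j in A :\ k) B k j * y j <= 0.
Proof.
apply: sumr_le0 => j jA'; apply: mulr_le0_ge0; last exact/ltW/y_gt0.
by move: jA'; rewrite in_setD1 => /andP[jk jA]; apply: zB; rewrite // eq_sym.
Qed.

Lemma pivot_row_zero : \sum_(j in A :\ k) B k j * y j = 0 ->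
  forall j, j \in A :\ k -> B k j = 0.
Proof.
move=> row0 j jA'.
have nonneg l : l \in A :\ k -> 0 <= - (B k l * y l).
  move=> lA'; rewrite oppr_ge0; apply: mulr_le0_ge0; last exact/ltW/y_gt0.
  by move: lA'; rewrite in_setD1 => /andP[lk lA]; apply: zB; rewrite // eq_sym.
have sum0 : \sum_(l in A :\ k) - (B k l * y l) = 0 by rewrite sumrN row0 oppr0.
have /eqP := psumr_eq0P nonneg sum0 jA'.
by rewrite oppr_eq0 mulf_eq0 (gt_eqF (y_gt0 jA')) orbF => /eqP.
Qed.

(* If it does, the pivot is positive: otherwise the form would be unbounded
   below along the pivot coordinate. *)
Lemma pivot_gt0 : \sum_(j in A :\ k) B k j * y j != 0 -> 0 < B k k.
Proof.
set bv := \sum_(j in A :\ k) B k j * y j => bv_neq0.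
rewrite lt_def pivot_ge0 andbT; apply/eqP => Bkk0.
set q := qform B (A :\ k) y.
have := psdB (fun i => if i == k then (q + 1) / (- (2 * bv)) else y i).
rewrite (qform_pivot _ _ kA) -/bv -/q Bkk0 mul0r add0r.
have -> : 2 * ((q + 1) / - (2 * bv)) * bv = - (q + 1) by field.
by rewrite opprD addrAC addNr add0r oppr_ge0 ler10.
Qed.

(* A positive supersolution of the Schur complement extends to one of B:
   x_k = 1 if the pivot row does not meet y, x_k = -(B_k. y) / B_kk if it does. *)
Lemma pivot_extend :
  (forall i, i \in A :\ k -> 0 <= \sum_(j in A :\ k) schur B k i j * y j) ->
  exists x : 'I_n -> R, (forall i, i \in A -> 0 < x i) /\
    (forall i, i \in A -> 0 <= \sum_(j in A) B i j * x j).
Proof.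
move=> schur_y_ge0; set bv := \sum_(j in A :\ k) B k j * y j.
have extend c i : \sum_(j in A) B i j * (if j == k then c else y j) =
    B i k * c + \sum_(j in A :\ k) B i j * y j.
  rewrite (big_setD1 k kA) eqxx; congr (_ + _).
  by apply: eq_bigr => j; rewrite in_setD1 => /andP[/negbTE-> _].
have schur_y i : \sum_(j in A :\ k) schur B k i j * y j =
    \sum_(j in A :\ k) B i j * y j - B i k / B k k * bv.
  by rewrite /bv mulr_sumr -sumrB; apply: eq_bigr => j _; rewrite /schur; ring.
pose xk := if bv == 0 then 1 else - bv / B k k.
exists (fun i => if i == k then xk else y i); split=> i iA.
  case: eqP => [_|/eqP ik]; last by apply: y_gt0; rewrite in_setD1 ik.
  rewrite /xk; case: eqP => [_|/eqP bv_neq0]; first exact: ltr01.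
  by rewrite divr_gt0 ?pivot_gt0 // oppr_gt0 lt_neqAle bv_neq0 pivot_row_le0.
rewrite extend; have [->|ik] := eqVneq i k.
  rewrite /xk -/bv; case: eqP => [->|/eqP bv_neq0]; first by rewrite mulr1 addr0 pivot_ge0.
  by rewrite mulrC divfK ?gt_eqF ?pivot_gt0 // addNr.
have iA' : i \in A :\ k by rewrite in_setD1 ik.
move: (schur_y_ge0 _ iA'); rewrite schur_y /xk.
case: eqP => [bv0|_]; last by rewrite addrC; congr (0 <= _); ring.
by rewrite bv0 symB pivot_row_zero // !mul0r subr0 add0r.
Qed.

End Supersolution.
End PSD.
End Symmetric.

Lemma zmatrix_supersolution_on (A : {set 'I_n}) B :
  (forall i j, B i j = B j i) ->
  (forall i j, i \in A -> j \in A -> i != j -> B i j <= 0) ->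
  (forall v, 0 <= qform B A v) ->
  exists x : 'I_n -> R, (forall i, i \in A -> 0 < x i) /\
    (forall i, i \in A -> 0 <= \sum_(j in A) B i j * x j).
Proof.
elim: {A}_.+1 {-2}A (ltnSn #|A|) B => // N IH A A_lt B symB zB psdB.
have [->|/set0Pn[k kA]] := eqVneq A set0.
  by exists (fun _ => 1); split=> i; rewrite in_set0.
have A'_lt : (#|A :\ k| < N)%N by move: A_lt; rewrite (cardsD1 k A) kA.
have [y [y_gt0 schur_y]] := IH (A :\ k) A'_lt (schur B k) (schur_sym symB k)
  (schur_zmatrix symB kA psdB zB) (schur_psd symB kA psdB).
by apply: (pivot_extend symB kA psdB zB y_gt0) => i iA; apply: schur_y.
Qed.

End ZMatrix.

Lemma zmatrix_supersolution (R : realFieldType) (n : nat) (B : 'I_n -> 'I_n -> R) :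
  (forall i j, B i j = B j i) -> (forall i j, i != j -> B i j <= 0) ->
  (forall v, 0 <= \sum_i \sum_j v i * B i j * v j) ->
  exists x : 'I_n -> R, (forall i, 0 < x i) /\ (forall i, 0 <= \sum_j B i j * x j).
Proof.
move=> symB zB psdB.
have sumT (F : 'I_n -> R) : \sum_(i in [set: 'I_n]) F i = \sum_i F i.
  by apply: eq_bigl => i; rewrite in_setT.
have psdT v : 0 <= qform B [set: 'I_n] v.
  by rewrite /qform sumT; under eq_bigr do rewrite sumT; exact: psdB.
have [x [x_gt0 Bx_ge0]] :=
  zmatrix_supersolution_on symB (fun i j _ _ => zB i j) psdT.
by exists x; split=> i; [apply: x_gt0 | rewrite -sumT; apply: Bx_ge0]; rewrite in_setT.
Qed.

Lemma realC_conj (R : rcfType) (r : R) : Num.conj (realC r) = realC r.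
Proof. exact: conjc_real. Qed.

Lemma psd_rank1_diag (R : rcfType) (n : nat) (lam : R) (u d : 'I_n -> R) :
  0 <= lam -> (forall r, 0 <= d r) ->
  psd (\matrix_(r, s) realC (lam * u r * u s + (r == s)%:R * d r)).
Proof.
move=> lam_ge0 d_ge0; split.
  apply/matrixP => r s; rewrite !mxE realC_conj; congr realC.
  by rewrite eq_sym; case: eqP => [->|_] //; rewrite !mul0r !addr0 mulrAC.
move=> v; rewrite !mxE.
set S := \sum_j realC (u j) * v j 0.
rewrite [X in 0 <= X](_ : _ = \sum_j (realC lam * (Num.conj S * (realC (u j) * v j 0))
    + realC (d j) * (Num.conj (v j 0) * v j 0))); last first.
  apply: eq_bigr => j _; rewrite !mxE /S rmorph_sum /= !big_distrl /= big_distrr /=.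
  rewrite (bigD1 j) //= [in RHS](bigD1 j) //= !mxE eqxx mul1r.
  rewrite (eq_bigr (fun i => realC lam * ((realC (u i) * v i 0)^* * (realC (u j) * v j 0)))).
    by rewrite /realC !rmorphD !rmorphM /= !realC_conj; ring.
  by move=> i /negbTE ij; rewrite !mxE ij mul0r addr0 /realC !rmorphM /= !realC_conj; ring.
rewrite big_split /= -big_distrr /= -mulr_sumr; apply: addr_ge0.
  by apply: mulr_ge0; [rewrite /realC ler0c |rewrite mulrC; exact: mul_conjC_ge0].
apply: sumr_ge0 => k _; apply: mulr_ge0; first by rewrite /realC ler0c.
by rewrite mulrC; exact: mul_conjC_ge0.
Qed.

Section Decomposition.
Variables (R : rcfType) (m n : nat) (adj : 'I_m -> 'I_n -> bool).
Variables (e : 'I_m -> 'I_n * 'I_n) (src : 'I_n -> 'I_m).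
Hypothesis hN : is_network adj.
Hypothesis he : forall a, (e a).1 != (e a).2 /\
  forall i, adj a i = (i == (e a).1) || (i == (e a).2).
Hypothesis src_adj : forall r, adj (src r) r.
Variables (C : 'M[R]_n) (x : 'I_n -> R).
Hypothesis C_sym : forall r w, C r w = C w r.
Hypothesis C_unshared : forall r w, r != w -> ~ share_source adj r w -> C r w = 0.
Hypothesis x_gt0 : forall r, 0 < x r.
Hypothesis Bx_ge0 : forall r, 0 <= \sum_w comparison C r w * x w.

(* The summand of source a with endpoints i, j: the rank-one matrix
   lam u u^T, with u = (x_j, sg(C_ij) x_i) on (i, j), which carries the entry
   C_ij, plus the slack (Bx)_r / x_r on the diagonal of the parties r whose
   chosen source is a. *)
Definition edge_weight a : R := `|C (e a).1 (e a).2| / (x (e a).1 * x (e a).2).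

Definition edge_vec a r : R :=
  if r == (e a).1 then x (e a).2
  else if r == (e a).2 then Num.sg (C (e a).1 (e a).2) * x (e a).1 else 0.

Definition slack a r : R :=
  if src r == a then (\sum_w comparison C r w * x w) / x r else 0.

Definition summand a : 'M[R[i]]_n :=
  \matrix_(r, s) realC (edge_weight a * edge_vec a r * edge_vec a s + (r == s)%:R * slack a r).

Let x_neq0 r : x r != 0. Proof. exact: lt0r_neq0. Qed.

Lemma summand_offdiag a r s : r != s ->
  edge_weight a * edge_vec a r * edge_vec a s = (adj a r && adj a s)%:R * C r s.
Proof.
case: (he a) => e12 ea rs; rewrite !ea /edge_weight /edge_vec.
set i := (e a).1 in e12 *; set j := (e a).2 in e12 *.
have sg_norm : Num.sg (C i j) * `|C i j| = C i j by rewrite -numEsg.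
have ji : (j == i) = false by rewrite eq_sym (negbTE e12).
have [rE|ri] := eqVneq r i.
  subst r; have [sE|sj] := eqVneq s j.
    by subst s; rewrite ji /= mul1r -[RHS]sg_norm; field; rewrite !x_neq0.
  have si : (s == i) = false by rewrite eq_sym (negbTE rs).
  by rewrite si /= mulr0 mul0r.
have [rE|rj] := eqVneq r j; last by rewrite /= !mulr0 !mul0r.
subst r; have [sE|si] := eqVneq s i.
  by subst s; rewrite /= mul1r (C_sym j) -[RHS]sg_norm; field; rewrite !x_neq0.
have sj : (s == j) = false by rewrite eq_sym (negbTE rs).
by rewrite sj /= mulr0 mul0r.
Qed.

Lemma summand_diag a r : edge_weight a * edge_vec a r * edge_vec a r =
  \sum_(w | w != r) (adj a r && adj a w)%:R * (`|C r w| * x w / x r).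
Proof.
case: (he a) => e12 ea; rewrite /edge_weight /edge_vec.
set i := (e a).1 in e12 ea *; set j := (e a).2 in e12 ea *.
have other_only k l : k != l -> adj a k -> adj a l ->
    \sum_(w | w != k) (adj a k && adj a w)%:R * (`|C k w| * x w / x k) = `|C k l| * x l / x k.
  move=> kl ak al; rewrite (bigD1 l) 1?eq_sym //= ak al mul1r big1 ?addr0 // => w /andP[wk wl].
  by rewrite (source_of_pair he kl ak al) (negbTE wk) (negbTE wl) andbF mul0r.
have [rE|ri] := eqVneq r i.
  subst r; rewrite (other_only i j) ?ea ?eqxx ?orbT //.
  by field; rewrite !x_neq0.
have [rE|rj] := eqVneq r j; last first.
  by rewrite mulr0 big1 // => w _; rewrite ea (negbTE ri) (negbTE rj) mul0r.
subst r; rewrite (other_only j i) ?ea ?eqxx ?orbT // 1?eq_sym // (C_sym j).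
have sg2 : Num.sg (C i j) * Num.sg (C i j) * `|C i j| = `|C i j|.
  by rewrite -mulrA -numEsg -normrEsg.
by rewrite -[in RHS]sg2; field; rewrite !x_neq0.
Qed.

(* The summands add up to C: off the diagonal by (C0) and uniqueness of the
   shared source, on the diagonal by the choice of the slack. *)
Lemma summand_sum r s :
  C r s = \sum_a (edge_weight a * edge_vec a r * edge_vec a s + (r == s)%:R * slack a r).
Proof.
have [<-|rs] := eqVneq r s; last first.
  under eq_bigr do rewrite mul0r addr0 summand_offdiag //.
  exact: esym (sum_shared_sources hN he rs (C_unshared rs)).
rewrite big_split /=; under eq_bigr do rewrite summand_diag.
rewrite exchange_big /=.
rewrite (eq_bigr (fun w => `|C r w| * x w / x r)) => [|w wr]; last first.
  have rw : r != w by rewrite eq_sym.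
  apply: (sum_shared_sources hN he rw) => /(C_unshared rw)->.
  by rewrite normr0 !mul0r.
have slack_r : \sum_a 1 * slack a r = (\sum_w comparison C r w * x w) / x r.
  rewrite (bigD1 (src r)) //= big1 => [|a ar]; first by rewrite /slack eqxx mul1r addr0.
  by rewrite /slack eq_sym (negbTE ar) mulr0.
have Bx_r : \sum_w comparison C r w * x w =
    C r r * x r - \sum_(w | w != r) `|C r w| * x w.
  rewrite (bigD1 r) //= /comparison eqxx -sumrN; congr (_ + _).
  by apply: eq_bigr => w wr; rewrite eq_sym (negbTE wr) mulNr.
by rewrite slack_r Bx_r -mulr_suml; field; rewrite x_neq0.
Qed.

Lemma summand_support a r : ~~ adj a r -> edge_vec a r = 0 /\ slack a r = 0.
Proof.
case: (he a) => _ ea ar; move: (ar); rewrite ea negb_or => /andP[/negbTE r1 /negbTE r2].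
split; first by rewrite /edge_vec r1 r2.
rewrite /slack; case: eqP => // src_a.
by move: (src_adj r) ar; rewrite src_a => ->.
Qed.

Lemma summand_psd a : psd (summand a).
Proof.
apply: psd_rank1_diag => [|r].
  by apply: divr_ge0; [exact: normr_ge0 | apply: mulr_ge0; apply: ltW].
by rewrite /slack; case: ifP => // _; apply: divr_ge0 => //; apply: ltW.
Qed.

Lemma decomposition_of_supersolution : compatible_decomposition adj (map_mx (@realC R) C).
Proof.
exists summand; split=> [a|]; first split; first exact: summand_psd.
  move=> r s; rewrite mxE; apply: contraR; rewrite negb_and.
  case/orP=> /summand_support [-> slack0].
    by rewrite slack0 !mulr0 mul0r addr0 /realC.
  have [rs|rs] := eqVneq r s; last by rewrite mulr0 mul0r addr0 /realC.
  by subst r; rewrite slack0 !mulr0 addr0 /realC.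
apply/matrixP => r s; rewrite !mxE summxE (summand_sum r s) /realC rmorph_sum.
by apply: eq_bigr => a _; rewrite mxE.
Qed.

End Decomposition.

Theorem theorem2 (R : realType) (T : finType) (m n : nat)
  (adj : 'I_m -> 'I_n -> bool)
  (hN : is_network adj) (hbip : bipartite_sources adj)
  (p : {ffun 'I_n -> T} -> R) (hp : causally_consistent adj p)
  (f : 'I_n -> T -> R) :
  compatible_decomposition adj (map_mx (@realC R) (cov_matrix p f)).
Proof.
have [e he] := bipartite_endpoints hbip.
have [src src_adj] : exists src : 'I_n -> 'I_m, forall r, adj (src r) r.
  by case: hN => _ covered _; exact: fin_all_exists covered.
have C_sym := cov_matrix_sym p f.
have [_ _ [Q inflations]] := hp.
have [Q_dist Q_marg1 Q_marg2 Q_indep] := inflations 2%N (infl_perm e p f) isT.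
have B_psd := comparison_form_ge0 he hp Q_marg1 Q_marg2 Q_indep Q_dist.
have [x [x_gt0 Bx_ge0]] :=
  zmatrix_supersolution (comparison_sym C_sym) (@comparison_offdiag _ _ _) B_psd.
apply: (decomposition_of_supersolution hN he src_adj C_sym _ x_gt0 Bx_ge0).
exact: cov_matrix_unshared.
Qed.
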